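(* Let $\kappa\in\mathbb{C}$, let $M\ge1$ be an integer and let $\phi_1,\dots,\phi_M$ be parameters. For each $k$ put $$\Delta^*_k=e^{-i\phi_k}\Bigl(\sqrt{\cos^2\phi_k+\kappa}+\cos\phi_k\Bigr),\qquad \Delta_k=e^{i\phi_k}\Bigl(\sqrt{\cos^2\phi_k+\kappa}+\cos\phi_k\Bigr),$$ (so that $\kappa=\Delta^*_k\Delta_k-\Delta^*_k-\Delta_k$). For $m\in\mathbb{Z}$, $x_1\in\mathbb{C}$ and amplitudes $f_1,\dots,f_M$ define $$X_m(x_1;\phi_k,f_k)=f_k\,e^{(\Delta^*_k-\Delta_k)x_1}\Bigl(\frac{\Delta_k}{\Delta^*_k}\Bigr)^{m+1}$$ and $$\boldsymbol{\tau}_m\bigl(x_1;\{\phi_k,f_k\}_{k=1}^M\bigr)=\prod_{i<j}(\Delta^*_i-\Delta^*_j)^{-1}\det\Bigl|(1-\Delta^*_j)^{i-1}-X_m(x_1;\phi_j,f_j)\,(1-\Delta_j)^{i-1}\frac{\Delta^*_j}{\Delta_j}\Bigr|_{i,j=1}^M .$$ Then for every choice of $\phi_1,\dots,\phi_M$ for which this expression is defined, $\boldsymbol{\tau}_m\bigl(0;\{\phi_k,1\}_{k=1}^M\bigr)=0$ for all $m\in\{-M+1,-M+2,\dots,0\}$.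
   Context: A fixed branch of the square root is used in the definition of $\Delta^*_k,\Delta_k$. ''Defined'' means that the $\Delta^*_k$ are pairwise distinct and $\Delta_k,\Delta^*_k\neq0$. The function $\boldsymbol{\tau}_m$ is the (normalized, rational) $M$-soliton tau-function of the relativistic Toda chain evaluated at continuous time $x_1$, with all soliton amplitudes $f_k$ set to $1$ in the claim. *)

From HB Require Import structures.
From mathcomp Require Import all_boot all_order all_algebra.
From mathcomp Require Import complex.
From mathcomp Require Import all_classical all_reals all_analysis.
Set Implicit Arguments. Unset Strict Implicit. Unset Printing Implicit Defensive.
Import Order.TTheory GRing.Theory Num.Theory.
Local Open Scope ring_scope.
Local Open Scope complex_scope.

Section Defs.
Variable R : realType.
Local Notation C := R[i].

Definition cexp (z : C) : C :=
  (expR (complex.Re z))%:C * ((cos (complex.Im z))%:C + 'i * (sin (complex.Im z))%:C).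

Definition sqrt_branch (s : C -> C) : Prop := forall z, s z ^+ 2 = z.

Definition DeltaS (s : C -> C) (kappa : C) (phi : R) : C :=
  cexp (- 'i * phi%:C) * (s ((cos phi)%:C ^+ 2 + kappa) + (cos phi)%:C).
Definition Delta (s : C -> C) (kappa : C) (phi : R) : C :=
  cexp ('i * phi%:C) * (s ((cos phi)%:C ^+ 2 + kappa) + (cos phi)%:C).

Definition Xm (s : C -> C) (kappa : C) (m : int) (x1 : C) (phi : R) (f : C) : C :=
  f * cexp ((DeltaS s kappa phi - Delta s kappa phi) * x1)
    * (Delta s kappa phi / DeltaS s kappa phi) ^ (m + 1).

(* tau_m(x1; {phi_k, f_k}_{k=1}^M); indices shifted to 0..M-1, so (.)^(i-1) becomes (.)^i *)
Definition tau (s : C -> C) (kappa : C) (M : nat) (m : int) (x1 : C)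
    (phi : 'I_M -> R) (f : 'I_M -> C) : C :=
  (\prod_(i < M) \prod_(j < M | (i < j)%N)
      (DeltaS s kappa (phi i) - DeltaS s kappa (phi j))^-1) *
  \det (\matrix_(i < M, j < M)
     ((1 - DeltaS s kappa (phi j)) ^+ i
      - Xm s kappa m x1 (phi j) (f j) * (1 - Delta s kappa (phi j)) ^+ i
          * (DeltaS s kappa (phi j) / Delta s kappa (phi j)))).
End Defs.

From HB Require Import structures.
From mathcomp Require Import all_boot all_order all_algebra.
From mathcomp Require Import complex.
From mathcomp Require Import all_classical all_reals all_analysis.
From mathcomp Require Import zify.
Import Order.TTheory GRing.Theory Num.Theory.
Local Open Scope ring_scope.
Local Open Scope complex_scope.

(* At [x1 = 0], [f = 1] and [m = -n], column [j] of the tau-matrix is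
   [(1 - a)^i - (a/b)^n (1 - b)^i] with [a = Delta^*_j], [b = Delta_j].
   Weighting row [i] by [(-1)^i C(n, i)] and summing turns [(1 - x)^i] into
   [x^n] by the binomial theorem, so every column sums to
   [a^n - (a/b)^n b^n = 0]; since [n < M] the weight of row 0 is 1, and the
   rows are linearly dependent. The determinant itself vanishes, so the
   prefactor, the branch of the square root and the distinctness of the
   [Delta^*_k] play no role. *)

Lemma expr1Bn_sum_ord (F : comNzRingType) (M n : nat) (x : F) : (n < M)%N ->
  \sum_(i < M) (-1) ^+ i * 'C(n, i)%:R * x ^+ i = (1 - x) ^+ n.
Proof.
move=> lt_nM; rewrite exprBn.
rewrite (big_ord_widen _ (fun i => (-1) ^+ i * 1 ^+ (n - i) * x ^+ i *+ 'C(n, i)) lt_nM).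
rewrite [RHS]big_mkcond; apply: eq_bigr => i _.
case: ifP => [_ | le_ni].
  by rewrite expr1n mulr1 -[in RHS]mulrnAr -[in RHS]mulr_natl mulrA.
by rewrite bin_small ?mulr0 ?mul0r // ltnNge -ltnS le_ni.
Qed.

Lemma det_expr1B_sub_eq0 (F : fieldType) (M n : nat) (a b c : 'I_M -> F) :
  (n < M)%N -> (forall j, c j * b j ^+ n = a j ^+ n) ->
  \det (\matrix_(i < M, j < M) ((1 - a j) ^+ i - c j * (1 - b j) ^+ i)) = 0.
Proof.
move=> lt_nM cb_a; apply/eqP/det0P.
have M_gt0 : (0 < M)%N := leq_ltn_trans (leq0n n) lt_nM.
exists (\row_(i < M) ((-1) ^+ i * 'C(n, i)%:R)).
  apply/eqP => /rowP /(_ (Ordinal M_gt0)) /eqP.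
  by rewrite !mxE /= bin0 mulr1 oner_eq0.
apply/rowP => j; rewrite !mxE.
under eq_bigr do rewrite !mxE mulrBr [_ * (c j * _)]mulrCA.
by rewrite sumrB -mulr_sumr !expr1Bn_sum_ord // !subKr cb_a subrr.
Qed.

Section TauAtOrigin.
Variables (R : realType) (s : R[i] -> R[i]) (kappa : R[i]).

Lemma cexp0 : cexp (0 : R[i]) = 1.
Proof. by rewrite /cexp /= expR0 cos0 sin0 mulr0 addr0 mul1r. Qed.

Lemma Xm_origin_oppz (n : nat) (phi : R) :
  DeltaS s kappa phi != 0 -> Delta s kappa phi != 0 ->
  Xm s kappa (- n%:Z) 0 phi 1 * (DeltaS s kappa phi / Delta s kappa phi) =
  (DeltaS s kappa phi / Delta s kappa phi) ^+ n.
Proof.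
move=> DeltaS_neq0 Delta_neq0.
have ratio_neq0 : DeltaS s kappa phi / Delta s kappa phi != 0.
  by rewrite mulf_neq0 ?invr_eq0.
rewrite /Xm mulr0 cexp0 !mul1r -invf_div expfzDr ?invr_eq0 //.
by rewrite expr1z divfK // exprz_inv opprK.
Qed.

End TauAtOrigin.

Theorem proposition3p3 (R : realType) (s : R[i] -> R[i]) (kappa : R[i])
    (M : nat) (phi : 'I_M -> R) :
  sqrt_branch s -> (0 < M)%N ->
  (forall k, DeltaS s kappa (phi k) != 0) ->
  (forall k, Delta s kappa (phi k) != 0) ->
  (forall k l, k != l -> DeltaS s kappa (phi k) != DeltaS s kappa (phi l)) ->
  forall m : int, - (M%:Z) + 1 <= m <= 0 ->
    tau s kappa m 0 phi (fun _ => 1) = 0.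
Proof.
move=> _ _ DeltaS_neq0 Delta_neq0 _ m /andP[m_ge m_le].
have [n -> lt_nM] : exists2 n : nat, m = - n%:Z & (n < M)%N.
  by exists `|m|%N; [rewrite -[m]opprK abszN gez0_abs ?oppr_ge0 | lia].
pose a j := DeltaS s kappa (phi j); pose b j := Delta s kappa (phi j).
rewrite /tau (_ : \matrix_(i, j) _ =
    \matrix_(i < M, j < M) ((1 - a j) ^+ i - (a j / b j) ^+ n * (1 - b j) ^+ i)).
  rewrite (@det_expr1B_sub_eq0 _ _ n) ?mulr0 // => j.
  by rewrite expr_div_n divfK // expf_neq0 // Delta_neq0.
by apply/matrixP => i j; rewrite !mxE mulrAC Xm_origin_oppz.
Qed.
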